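(* Let $g\in\mathrm{O}(n)$ and let $1\le m<p\le n$. Write $g=\begin{pmatrix}P&Q\\ R&T\end{pmatrix}$ with blocks of sizes $(m+(n-m))\times(m+(n-m))$, assume $1+P$ is invertible, and set $\Upsilon^m(g)=T-R(1+P)^{-1}Q$. For a matrix $A$ let $[A]_k$ denote its upper left $k\times k$ corner. Then $$\det\big(1+[g]_p\big)=\det\big(1+[g]_m\big)\,\det\big(1+[\Upsilon^m(g)]_{p-m}\big).$$ *)

From HB Require Import structures.
From mathcomp Require Import all_boot all_order all_algebra.
Set Implicit Arguments. Unset Strict Implicit. Unset Printing Implicit Defensive.
Import GRing.Theory Num.Theory.
Local Open Scope ring_scope.

Definition orthogonal_mx (R : realFieldType) (n : nat) (g : 'M[R]_n) : Prop :=
  g *m g^T = 1%:M.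

Definition corner (R : Type) (n k : nat) (H : (k <= n)%N) (A : 'M[R]_n) : 'M[R]_k :=
  mxsub (widen_ord H) (widen_ord H) A.

Definition blockify (R : Type) (n m : nat) (H : (m <= n)%N) (g : 'M[R]_n)
  : 'M[R]_(m + (n - m)) :=
  castmx (esym (subnKC H), esym (subnKC H)) g.

Definition Upsilon (R : fieldType) (n m : nat) (H : (m <= n)%N) (g : 'M[R]_n)
  : 'M[R]_(n - m) :=
  let h := blockify H g in
  drsubmx h - dlsubmx h *m invmx (1%:M + ulsubmx h) *m ursubmx h.

From HB Require Import structures.
From mathcomp Require Import all_boot all_order all_algebra.
Set Implicit Arguments. Unset Strict Implicit.
Import GRing.Theory Num.Theory.
Local Open Scope ring_scope.

(* For a block matrix M = [[A, B], [C, D]] with A invertible, det M factors as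
   det A * det (D - C A^-1 B), and the Schur complement D - C A^-1 B commutes
   with taking upper left corners of size m + k, k <= l.  Applied to M = 1 + g
   with A = 1 + P, the Schur complement is 1 + Upsilon^m(g). *)

Section SchurComplement.
Variable R : comUnitRingType.

Definition schur_compl a b (M : 'M[R]_(a + b)) : 'M[R]_b :=
  drsubmx M - dlsubmx M *m invmx (ulsubmx M) *m ursubmx M.

Lemma det_schur_compl a b (M : 'M[R]_(a + b)) :
  ulsubmx M \in unitmx -> \det M = \det (ulsubmx M) * \det (schur_compl M).
Proof.
move=> unitA; rewrite -{1}(submxK M) /schur_compl.
set A := ulsubmx M; set B := ursubmx M; set C := dlsubmx M; set D := drsubmx M.
have -> : block_mx A B C D = block_mx 1%:M 0 (C *m invmx A) 1%:M
                              *m block_mx A B 0 (D - C *m invmx A *m B).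
  rewrite mulmx_block !mul1mx !mul0mx !addr0 mulmxKV //.
  by rewrite addrC subrK.
by rewrite det_mulmx det_lblock det_ublock !det1 !mul1r.
Qed.

Lemma schur_compl1D a b (M : 'M[R]_(a + b)) :
  schur_compl (1%:M + M)
  = 1%:M + (drsubmx M - dlsubmx M *m invmx (1%:M + ulsubmx M) *m ursubmx M).
Proof.
rewrite /schur_compl -[M]submxK scalar_mx_block add_block_mx.
by rewrite !(block_mxKul, block_mxKur, block_mxKdl, block_mxKdr) !add0r addrA.
Qed.

End SchurComplement.

Lemma cornerD (R : pzSemiRingType) n k (H : (k <= n)%N) (A B : 'M[R]_n) :
  corner H (A + B) = corner H A + corner H B.
Proof. exact: raddfD. Qed.

Lemma corner_scalar (R : pzSemiRingType) n k (H : (k <= n)%N) (a : R) :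
  corner H a%:M = a%:M.
Proof. by apply/matrixP=> i j; rewrite !mxE. Qed.

Section CornerBlocks.
Variable R : Type.

Lemma corner_ulsubmx m l (H : (m <= m + l)%N) (M : 'M[R]_(m + l)) :
  corner H M = ulsubmx M.
Proof. by apply/matrixP=> i j; rewrite !mxE; congr (M _ _); apply: val_inj. Qed.

Variables (m k l : nat) (Hk : (k <= l)%N) (H : (m + k <= m + l)%N).
Variable M : 'M[R]_(m + l).

Lemma ulsubmx_corner : ulsubmx (corner H M) = ulsubmx M.
Proof. by apply/matrixP=> i j; rewrite !mxE; congr (M _ _); apply: val_inj. Qed.

Lemma ursubmx_corner : ursubmx (corner H M) = colsub (widen_ord Hk) (ursubmx M).
Proof. by apply/matrixP=> i j; rewrite !mxE; congr (M _ _); apply: val_inj. Qed.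

Lemma dlsubmx_corner : dlsubmx (corner H M) = rowsub (widen_ord Hk) (dlsubmx M).
Proof. by apply/matrixP=> i j; rewrite !mxE; congr (M _ _); apply: val_inj. Qed.

Lemma drsubmx_corner : drsubmx (corner H M) = corner Hk (drsubmx M).
Proof. by apply/matrixP=> i j; rewrite !mxE; congr (M _ _); apply: val_inj. Qed.

End CornerBlocks.

Lemma schur_compl_corner (R : comUnitRingType) m k l (Hk : (k <= l)%N)
    (H : (m + k <= m + l)%N) (M : 'M[R]_(m + l)) :
  schur_compl (corner H M) = corner Hk (schur_compl M).
Proof.
rewrite /schur_compl ulsubmx_corner (ursubmx_corner Hk) (dlsubmx_corner Hk).
by rewrite drsubmx_corner /corner raddfB /= mxsub_mul -mul_rowsub_mx.
Qed.

Theorem proposition2p4 (R : realFieldType) (n m p : nat) (g : 'M[R]_n)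
  (Hm : (m <= n)%N) (Hp : (p <= n)%N) (Hm1 : (1 <= m)%N) (Hmp : (m < p)%N) :
  orthogonal_mx g ->
  (1%:M + ulsubmx (blockify Hm g)) \in unitmx ->
  \det (1%:M + corner Hp g)
  = \det (1%:M + corner Hm g)
    * \det (1%:M + corner (leq_sub2r m Hp) (Upsilon Hm g)).
Proof.
move=> _; rewrite /Upsilon /blockify.
move: (leq_sub2r m Hp) (subnKC Hm) (subnKC (ltnW Hmp)).
move: (n - m)%N (p - m)%N => l k Hk eq_n eq_p; subst n p.
rewrite castmx_id => unitP.
have ul1D : ulsubmx (1%:M + g) = 1%:M + corner Hm g.
  by rewrite -(corner_ulsubmx Hm) cornerD corner_scalar.
rewrite -(corner_scalar Hp 1) -cornerD det_schur_compl ulsubmx_corner ?ul1D //.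
  by rewrite (schur_compl_corner Hk) schur_compl1D cornerD corner_scalar.
by rewrite corner_ulsubmx.
Qed.
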